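(* Let $(X_n)_{n\in\mathbb{N}}$ be i.i.d. real random variables with distribution function $F$ and survival function $\bar F(x)=\mathbb{P}(X_1>x)$, with $\bar F(x)=x^{-\alpha}L(x)$ for all $x>x_0$, where $x_0>0$, $\alpha>0$ and $L$ is slowly varying, and assume $X_1$ has a density $f$ that is non-increasing on $[x_1,\infty)$ for some $x_1$. Let $a_n=F^{\leftarrow}(1-1/n)$ and, for $n\ge2$ and $x>0$, $t_n(x)=a_n x^{\log n/\alpha}$ and \[ g_n(x)=n\,a_n\,\frac{\alpha}{\log n}\,x^{\frac{\log n}{\alpha}-1}\,F^{n-1}(t_n(x))\,f(t_n(x)), \] which is the density on $(0,\infty)$ of $Z_n=(X_{(n)}/a_n)^{\alpha/\log n}$, $X_{(n)}=\max_{1\le i\le n}X_i$. Then for every fixed $M>1$, \[ \lim_{n\to\infty}\frac{1}{\log n}\log g_n(x)=-\log x \] uniformly in $x\in[1,M]$.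
   Context: A function $L:(0,\infty)\to(0,\infty)$ is slowly varying if $\lim_{x\to\infty}L(tx)/L(x)=1$ for all $t>0$. $F^{\leftarrow}(u)=\inf\{x\in\mathbb{R}: F(x)\ge u\}$ denotes the left-inverse of $F$. *)

From HB Require Import structures.
From mathcomp Require Import all_boot all_order all_algebra.
From mathcomp Require Import all_classical all_reals all_analysis.
Set Implicit Arguments. Unset Strict Implicit. Unset Printing Implicit Defensive.
Import Order.TTheory GRing.Theory Num.Theory.
Import numFieldNormedType.Exports.
Local Open Scope classical_set_scope.
Local Open Scope ring_scope.

Definition slowly_varying {R : realType} (L : R -> R) : Prop :=
  (forall x : R, 0 < x -> 0 < L x) /\
  (forall t : R, 0 < t -> L (t * x) / L x @[x --> +oo%R] --> (1 : R)).

Definition gen_left_inverse {R : realType} (F : R -> R) (u : R) : R :=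
  inf [set x : R | u <= F x].

Definition distr_fun {d} {T : measurableType d} {R : realType}
  (P : probability T R) (X : T -> R) (x : R) : R :=
  fine (P [set w | X w <= x]).

From HB Require Import structures.
From mathcomp Require Import all_boot all_order all_algebra.
From mathcomp Require Import all_classical all_reals all_analysis.
From mathcomp Require Import lra ring measurable_realfun.
Set Implicit Arguments.
Unset Strict Implicit.
Unset Printing Implicit Defensive.

Import Order.TTheory GRing.Theory Num.Theory.
Import numFieldNormedType.Exports.
Local Open Scope classical_set_scope.
Local Open Scope ring_scope.

(* Write G = 1 - F, so that G x = x^-alpha L x for large x. Since L (2x) / L x -> 1 and G is
   monotone, comparing L on successive dyadic blocks gives ln L y = o(ln y), hence
   ln G y = -alpha ln y + o(ln y). A non-increasing density is squeezed between
   (G t - G (2t)) / t and 2 G (t/2) / t, and G (2t) <= theta G t with theta < 1, so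
   ln f t = -(alpha + 1) ln t + o(ln t). The quantile a_n satisfies G (2 a_n) <= 1/n < G (a_n / 2),
   whence alpha ln a_n = ln n + o(ln n); moreover G a_n <= 1/n, so F(t_n x)^(n-1) >= e^-2.
   Inserting ln t_n x = ln a_n + (ln n / alpha) ln x into ln g_n x, every term except
   -ln n ln x is o(ln n), uniformly for x in [1, M]. *)

Section RealFacts.
Variable R : realType.

Lemma ln2_gt0 : 0 < ln (2 : R).
Proof. by rewrite ln_gt0 // ltr1n. Qed.

Lemma ln1B_ge (u : R) : 0 <= u <= 1 / 2 -> - (2 * u) <= ln (1 - u).
Proof.
move=> /andP[u0 u1]; have u1' : 0 < 1 - u by lra.
have lnV1B : ln ((1 - u)^-1) = ln (1 + u / (1 - u)).
  by congr ln; field; exact: lt0r_neq0.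
have : ln (1 + u / (1 - u)) <= u / (1 - u).
  by apply: le_ln1Dx; have := divr_ge0 u0 (ltW u1'); lra.
rewrite -lnV1B lnV ?posrE // => h.
have : u / (1 - u) <= 2 * u by rewrite ler_pdivrMr //; nra.
lra.
Qed.

Lemma near_ln_ge (c : R) : \forall y \near +oo, c <= ln y.
Proof.
near=> y; have y_gt0 : 0 < y by near: y; apply: nbhs_pinfty_gt; rewrite num_real.
by rewrite -[c]expRK ler_ln ?posrE ?expR_gt0.
Unshelve. all: by end_near. Qed.

Lemma near_ln_le_mul (e : R) : 0 < e -> \forall y \near +oo, ln y <= e * y.
Proof.
move=> e_gt0; near=> y.
have y_gt0 : 0 < y by near: y; apply: nbhs_pinfty_gt; rewrite num_real.
have split_ln : ln y = ln (2 / e) + ln (e * y / 2).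
  rewrite -lnM ?posrE ?divr_gt0 ?mulr_gt0 //; congr ln; field; exact: lt0r_neq0.
have hsub : ln (e * y / 2) < e * y / 2 by apply: ln_sublinear; rewrite divr_gt0 ?mulr_gt0.
have hc : ln (2 / e) <= e * y / 2.
  by rewrite ler_pdivlMr // -ler_pdivrMl.
rewrite split_ln; lra.
Unshelve. all: by end_near. Qed.

Lemma near_lnln_le (e : R) : 0 < e ->
  \forall n \near \oo, ln (ln (n%:R : R)) <= e * ln n%:R.
Proof.
move=> e_gt0; have [Y [_ hY]] := near_ln_le_mul e_gt0.
near=> n; apply: hY; apply: lt_le_trans (ltr_pwDr ltr01 (lexx Y)) _.
by near: n; exact: cvgr_idn (near_ln_ge _).
Unshelve. all: by end_near. Qed.

Lemma ln_density_product (n a alpha x u v : R) (k : nat) :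
  1 < n -> 0 < a -> 0 < alpha -> 0 < x -> 0 < u -> 0 < v ->
  ln (n * a * (alpha / ln n) * x `^ (ln n / alpha - 1) * u ^+ k * v) =
  ln n + ln a + ln alpha - ln (ln n) + (ln n / alpha - 1) * ln x + k%:R * ln u + ln v.
Proof.
move=> n1 a_gt0 alpha_gt0 x_gt0 u_gt0 v_gt0.
have [n_gt0 lnn_gt0] : 0 < n /\ 0 < ln n by rewrite ln_gt0 // (lt_trans ltr01).
rewrite !lnM ?posrE ?mulr_gt0 ?divr_gt0 ?invr_gt0 ?powR_gt0 ?exprn_gt0 //.
by rewrite lnV ?posrE // ln_powR lnXn // mulr_natl addrA.
Qed.

Lemma dyadic_block_bound (h : R -> R) (X0 B eta : R) :
  0 < X0 -> (forall x, X0 <= x -> `|h (2 * x) - h x| <= eta) ->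
  (forall s, X0 <= s <= 2 * X0 -> `|h s| <= B) ->
  forall (k : nat) y, X0 <= y <= 2 ^+ k.+1 * X0 -> `|h y| <= B + k%:R * eta.
Proof.
move=> X0_gt0 hdouble hB; have eta0 : 0 <= eta.
  by apply: le_trans (hdouble X0 (lexx _)); exact: normr_ge0.
elim=> [|k IHk] y /andP[Xy yX]; first by rewrite mul0r addr0; apply: hB; rewrite Xy.
have [y2X|y2X] := lerP y (2 * X0).
  apply: le_trans (hB y _) _; first by rewrite Xy.
  by rewrite lerDl mulr_ge0.
have hy2 : `|h (y / 2)| <= B + k%:R * eta.
  by apply: IHk; rewrite exprS in yX; apply/andP; split; lra.
have := hdouble (y / 2) ltac:(lra); rewrite mulrC divfK ?pnatr_eq0 // => hy.
have := ler_normD (h y - h (y / 2)) (h (y / 2)); rewrite subrK mulrSr.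
lra.
Qed.

Lemma doubling_little_o_ln (h : R -> R) :
  (forall eta, 0 < eta -> \forall x \near +oo, `|h (2 * x) - h x| <= eta) ->
  (\forall X \near +oo, exists B, forall s, X <= s <= 2 * X -> `|h s| <= B) ->
  forall delta, 0 < delta -> \forall y \near +oo, `|h y| <= delta * ln y.
Proof.
move=> hdouble hblock delta delta_gt0; have ln2_pos := ln2_gt0.
have eta_gt0 : 0 < delta * ln 2 / 2 by rewrite divr_gt0 // mulr_gt0 // ln2_gt0.
have [M [_ hM]] := hdouble _ eta_gt0.
have [X0 X0_ge1 [MX0 [B hB]]] := pinfty_ex_ge (num_real 1)
  (filterI (nbhs_pinfty_gt (num_real M)) hblock).
have X0_gt0 : 0 < X0 by lra.
have hd x : X0 <= x -> `|h (2 * x) - h x| <= delta * ln 2 / 2 by move=> ?; apply: hM; lra.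
near=> y.
have y_ge : X0 <= y by near: y; apply: nbhs_pinfty_ge; rewrite num_real.
have lnX0y : 0 <= ln (y / X0) by rewrite ln_ge0 // ler_pdivlMr // mul1r.
pose k := Num.truncn (ln (y / X0) / ln 2).
have k_ub : ln (y / X0) / ln 2 < k.+1%:R by exact: truncnS_gt.
have k_lb : k%:R <= ln (y / X0) / ln 2 by rewrite truncn_le divr_ge0 // ltW // ln2_gt0.
have y_block : X0 <= y <= 2 ^+ k.+1 * X0.
  rewrite y_ge /= -ler_pdivrMr // -[y / X0]lnK ?posrE ?divr_gt0 //.
  rewrite -[2 ^+ k.+1]lnK ?posrE ?exprn_gt0 // ler_expR lnXn //.
  by move: k_ub; rewrite ltr_pdivrMr // mulr_natl => /ltW.
have hk : `|h y| <= B + k%:R * (delta * ln 2 / 2) := dyadic_block_bound X0_gt0 hd hB y_block.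
have lnX0_ge0 : 0 <= ln X0 by rewrite ln_ge0.
have lny : ln (y / X0) = ln y - ln X0 by rewrite ln_div ?posrE //; lra.
have hK : k%:R * (delta * ln 2 / 2) <= delta * ln y / 2.
  apply: le_trans (ler_wpM2r (ltW eta_gt0) k_lb) _.
  rewrite lny; have -> : (ln y - ln X0) / ln 2 * (delta * ln 2 / 2) =
    delta * ln y / 2 - delta * ln X0 / 2 by field; exact: lt0r_neq0.
  by rewrite lerBlDr lerDl divr_ge0 ?mulr_ge0 // ltW.
have hB2 : B <= delta * ln y / 2.
  have : 2 * B / delta <= ln y by near: y; exact: near_ln_ge.
  by rewrite ler_pdivrMr // ler_pdivlMr // mulrC [delta * _]mulrC.
by apply: le_trans hk _; rewrite [X in _ <= X]splitr; exact: lerD.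
Unshelve. all: by end_near. Qed.

(* The arithmetic of [ln_quantile_asymp]: [gp] and [gm] stand for [ln G] at [2 a_n] and
   [a_n / 2], [c] for [ln 2] and [lam] for [ln a_n]. *)
Lemma quantile_ln_estimate (alpha delta d c l lam gp gm : R) :
  0 < alpha -> 0 < d -> d <= alpha / 2 -> d <= alpha * delta / 4 -> 0 < delta ->
  0 < c -> c <= lam -> 4 * alpha * c <= delta * l ->
  gp <= - l -> - l < gm ->
  `|gp + alpha * (c + lam)| <= d * (c + lam) -> `|gm + alpha * (lam - c)| <= d * (lam - c) ->
  `|l - alpha * lam| <= delta * l.
Proof.
move=> alpha_gt0 d_gt0 d_le1 d_le2 delta_gt0 c_gt0 c_lam big gp_le gm_gt.
rewrite !ler_norml => /andP[jp _] /andP[_ jm].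
have h1 : alpha / 2 * (lam - c) <= (alpha - d) * (lam - c) by rewrite ler_wpM2r //; lra.
have h2 : alpha * (lam - c) < 2 * l by lra.
have h3 : d * (lam - c) <= alpha * delta / 4 * (lam - c) by rewrite ler_wpM2r //; lra.
have h4 : delta / 4 * (alpha * (lam - c)) <= delta / 4 * (2 * l).
  by rewrite ler_wpM2l ?divr_ge0 ?ltW.
have h5 : d * c <= alpha / 2 * c by rewrite ler_wpM2r // ltW.
lra.
Qed.

Lemma survival_quantile_bounds (G : R -> R) (p B : R) :
  nonincreasing_fun G -> p < G B -> (exists y, G y <= p) ->
  [/\ B <= inf [set x | G x <= p],
      forall y, y < inf [set x | G x <= p] -> p < G y &
      forall y, inf [set x | G x <= p] < y -> G y <= p].
Proof.
move=> G_noninc pGB [y0 Gy0]; set S := [set x | G x <= p].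
have S_lb : lbound S B.
  move=> z; rewrite /S /= => Gz; rewrite leNgt; apply/negP => zB.
  by have := G_noninc _ _ (ltW zB); lra.
have S_ne : S !=set0 by exists y0.
split; first exact: lb_le_inf.
- move=> y ya; rewrite ltNge; apply/negP => Gy.
  by have := ge_inf (ex_intro _ B S_lb) Gy; lra.
- move=> y /(inf_lt S_ne) [s]; rewrite /S /= => Gs sy.
  by apply: le_trans (G_noninc _ _ (ltW sy)) Gs.
Qed.

End RealFacts.

Section SurvivalFunction.
Context d (T : measurableType d) (R : realType) (P : probability T R) (X : {RV P >-> R}).

Let survivalE x : P [set w | x < X w] = ccdf X x.
Proof. by congr (P _); apply/seteqP; split => w /=; rewrite in_itv /= andbT. Qed.

Lemma distr_funE x : distr_fun P X x = 1 - fine (P [set w | x < X w]).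
Proof.
rewrite /distr_fun survivalE (_ : P [set w | X w <= x] = cdf X x) //.
have := congr1 fine (cdf_ccdf_1 X x); rewrite fineD ?fin_num_measure //= => <-.
by rewrite addrK.
Qed.

Lemma survival_noninc : nonincreasing_fun (fun x => fine (P [set w | x < X w])).
Proof.
move=> u v uv; rewrite /= !survivalE fine_le ?fin_num_measure //.
exact: ccdf_nonincreasing.
Qed.

End SurvivalFunction.

Section MonotoneDensity.
Context (R : realType) (f : R -> R) (x1 : R).
Hypotheses (f_meas : measurable_fun setT f) (f_ge0 : forall x, 0 <= f x)
  (f_noninc : forall x y, x1 <= x -> x <= y -> f y <= f x).

Lemma integral_itvNy_split u v : u <= v ->
  (\int[lebesgue_measure]_(y in `]-oo, v]) (f y)%:E =
   \int[lebesgue_measure]_(y in `]-oo, u]) (f y)%:E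
   + \int[lebesgue_measure]_(y in `]u, v]) (f y)%:E)%E.
Proof.
move=> uv; have mfE : measurable_fun setT (fun y => (f y)%:E) by apply/measurable_EFinP.
have -> : [set` `]-oo, v]] = [set` `]-oo, u]] `|` [set` `]u, v]].
  apply/seteqP; split => y /=; rewrite !in_itv /=.
    by case: (leP y u) => yu /= yv; [left | right].
  by case => [yu|/andP[_ yv]]; [apply: le_trans uv | ].
rewrite ge0_integral_setU //; first exact: measurable_funTS.
- by move=> y _; rewrite lee_fin.
- rewrite disj_set2E; apply/eqP; rewrite -subset0 => y [] /=.
  by rewrite !in_itv /= => yu /andP[uy _]; move: (lt_le_trans uy yu); rewrite ltxx.
Qed.

Let integral_itv_oc_cst (u v c : R) : u <= v ->
  (\int[lebesgue_measure]_(y in `]u, v]) (cst c%:E) y = ((v - u) * c)%:E)%E.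
Proof.
move=> uv; rewrite integral_cst //.
rewrite -[X in (_ * X)%E]/(lebesgue_measure [set` `]u, v]]) lebesgue_measure_itv /= lte_fin.
case: ltP => [_|vu]; first by rewrite -EFinD -EFinM mulrC.
by rewrite (@le_anti _ _ v u) ?uv ?vu // subrr mul0r mule0.
Qed.

Lemma integral_itv_oc_bounds u v : x1 <= u -> u <= v ->
  (((v - u) * f v)%:E <= \int[lebesgue_measure]_(y in `]u, v]) (f y)%:E
     <= ((v - u) * f u)%:E)%E.
Proof.
move=> x1u uv; rewrite -!integral_itv_oc_cst //.
have mf : measurable_fun setT (fun y => (f y)%:E) by apply/measurable_EFinP.
have f_itv y : y \in `]u, v] -> f v <= f y <= f u.
  rewrite in_itv /= => /andP[uy yv]; have x1y : x1 <= y by apply: le_trans x1u (ltW uy).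
  by apply/andP; split; apply: f_noninc => //; exact: ltW.
apply/andP; split; apply: ge0_le_integral => //.
all: try by move=> y _; rewrite lee_fin.
all: try exact: measurable_funTS.
- by move=> y /(f_itv y) /andP[+ _]; rewrite lee_fin.
- by move=> y /(f_itv y) /andP[_ +]; rewrite lee_fin.
Qed.

Lemma distr_fun_increment d (T : measurableType d) (P : probability T R)
    (X : {RV P >-> R}) :
  (forall x, P [set w | X w <= x] = (\int[lebesgue_measure]_(y in `]-oo, x]) (f y)%:E)%E) ->
  forall u v, x1 <= u -> u <= v ->
  (v - u) * f v <= distr_fun P X v - distr_fun P X u <= (v - u) * f u.
Proof.
move=> hdens u v x1u uv.
have Pu_fin : (\int[lebesgue_measure]_(y in `]-oo, u]) (f y)%:E)%E \is a fin_num.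
  by rewrite -hdens (_ : P _ = cdf X u) // fin_num_measure.
have /andP[lo hi] := integral_itv_oc_bounds x1u uv.
have I_fin : (\int[lebesgue_measure]_(y in `]u, v]) (f y)%:E)%E \is a fin_num.
  by rewrite fin_numElt (lt_le_trans (ltNyr _) lo) (le_lt_trans hi (ltry _)).
rewrite /distr_fun !hdens (integral_itvNy_split uv) fineD // addrAC subrr add0r.
by rewrite -!lee_fin fineK // lo hi.
Qed.

End MonotoneDensity.

Section RegularlyVaryingTail.
Variables (R : realType) (alpha x0 : R) (L G : R -> R).
Hypotheses (alpha_gt0 : 0 < alpha) (L_gt0 : forall x, 0 < x -> 0 < L x)
  (L_doubling : L (2 * x) / L x @[x --> +oo] --> (1 : R))
  (G_noninc : nonincreasing_fun G)
  (G_tail : forall x, x0 < x -> G x = x `^ (- alpha) * L x).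

Let near_tail : \forall x \near +oo, 1 <= x /\ x0 < x.
Proof. exact: filterI (nbhs_pinfty_ge (num_real 1)) (nbhs_pinfty_gt (num_real x0)). Qed.

Lemma G_tail_gt0 x : 0 < x -> x0 < x -> 0 < G x.
Proof. by move=> x_gt0 xx0; rewrite G_tail // mulr_gt0 ?powR_gt0 ?L_gt0. Qed.

Lemma ln_G_tail x : 0 < x -> x0 < x -> ln (G x) = ln (L x) - alpha * ln x.
Proof.
move=> x_gt0 xx0; rewrite G_tail // lnM ?posrE ?powR_gt0 ?L_gt0 // ln_powR.
by rewrite mulNr addrC.
Qed.

Lemma ln_L_doubling eta : 0 < eta ->
  \forall x \near +oo, `|ln (L (2 * x)) - ln (L x)| <= eta.
Proof.
move=> eta_gt0.
have : ln (L (2 * x) / L x) @[x --> +oo] --> (ln 1 : R).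
  exact: continuous_cvg (continuous_ln _) L_doubling.
rewrite ln1 => /cvgrPdist_le /(_ eta eta_gt0); apply: filterS2 near_tail.
move=> x [x_ge1 _]; rewrite sub0r normrN ln_div // posrE L_gt0 //; lra.
Qed.

Lemma ln_L_block_bounded :
  \forall X \near +oo, exists B, forall s, X <= s <= 2 * X -> `|ln (L s)| <= B.
Proof.
apply: filterS near_tail => X [X1 Xx0].
exists (`|ln (G X)| + `|ln (G (2 * X))| + alpha * ln (2 * X)) => s /andP[Xs sX].
have GX_gt0 : 0 < G X by apply: G_tail_gt0; lra.
have G2X_gt0 : 0 < G (2 * X) by apply: G_tail_gt0; lra.
have lnG_s : ln (G (2 * X)) <= ln (G s) <= ln (G X).
  have Gs_gt0 : 0 < G s by exact: lt_le_trans G2X_gt0 (G_noninc sX).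
  by apply/andP; split; rewrite ler_ln ?posrE //; exact: G_noninc.
have ln_s : 0 <= ln s <= ln (2 * X) by rewrite ln_ge0 ?ler_ln ?posrE //=; lra.
rewrite -[ln (L s)](subrK (alpha * ln s)) -ln_G_tail; [|lra|lra].
move: lnG_s ln_s => /andP[lo hi] /andP[s0 s2X].
have := ler_norm (ln (G X)); have := ler_norm (- ln (G (2 * X))); rewrite normrN.
have := normr_ge0 (ln (G X)); have := normr_ge0 (ln (G (2 * X))).
have : alpha * ln s <= alpha * ln (2 * X) by rewrite ler_pM2l.
have : 0 <= alpha * ln s by rewrite mulr_ge0 // ltW.
rewrite ler_norml; lra.
Qed.

Lemma ln_L_little_o delta : 0 < delta -> \forall y \near +oo, `|ln (L y)| <= delta * ln y.
Proof.
exact: (@doubling_little_o_ln _ (fun y => ln (L y)) ln_L_doubling ln_L_block_bounded).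
Qed.

Lemma ln_G_little_o delta : 0 < delta ->
  \forall y \near +oo, `|ln (G y) + alpha * ln y| <= delta * ln y.
Proof.
move=> delta_gt0; apply: filterS2 near_tail (ln_L_little_o delta_gt0) => y [y1 yx0].
by rewrite ln_G_tail ?subrK //; lra.
Qed.

Lemma G_doubling_contraction :
  exists2 theta, theta < 1 & \forall x \near +oo, G (2 * x) <= theta * G x.
Proof.
pose q : R := 2 `^ (- alpha).
have q_gt0 : 0 < q by rewrite powR_gt0.
have q_lt1 : q < 1.
  rewrite -[q]lnK ?posrE // -expR0 ltr_expR ln_powR mulNr oppr_lt0.
  by rewrite mulr_gt0 // ln2_gt0.
have e_gt0 : 0 < (1 - q) / (2 * q) by rewrite divr_gt0 ?mulr_gt0 //; lra.
exists ((1 + q) / 2); first lra.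
move/cvgrPdist_le : L_doubling => /(_ _ e_gt0); apply: filterS2 near_tail.
move=> x [x_ge1 xx0] hx; have Lx_gt0 : 0 < L x by apply: L_gt0; lra.
have L2x : L (2 * x) <= (1 + (1 - q) / (2 * q)) * L x.
  by rewrite -ler_pdivrMr //; move: hx; rewrite ler_distlC => /andP[_]; lra.
rewrite !G_tail; [|lra|lra].
rewrite powRM -?/q; [|lra|lra].
have -> : (1 + q) / 2 = q * (1 + (1 - q) / (2 * q)) by field; exact: lt0r_neq0.
by rewrite -!mulrA ler_pM2l // mulrCA ler_pM2l // powR_gt0 //; lra.
Qed.

Variables (x1 : R) (f : R -> R).
Hypothesis G_increment : forall u v, x1 <= u -> u <= v ->
  (v - u) * f v <= G u - G v <= (v - u) * f u.

Lemma density_bounds : exists2 c, 0 < c &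
  \forall t \near +oo, c * G t / t <= f t /\ f t <= 2 * G (t / 2) / t.
Proof.
have [theta theta_lt1 hcontr] := G_doubling_contraction.
exists (1 - theta); first lra.
near=> t.
have [t1 tx0] : 1 <= t /\ x0 < t by near: t; exact: near_tail.
have tx1 : 2 * x1 <= t by near: t; apply: nbhs_pinfty_ge; rewrite num_real.
have Gt_gt0 : 0 < G t by apply: G_tail_gt0; lra.
have G2t : G (2 * t) <= theta * G t by near: t; exact: hcontr.
have /andP[_ inc_lo] : (2 * t - t) * f (2 * t) <= G t - G (2 * t) <= (2 * t - t) * f t.
  by apply: G_increment; lra.
have /andP[inc_hi _] : (t - t / 2) * f t <= G (t / 2) - G t <= (t - t / 2) * f (t / 2).
  by apply: G_increment; lra.
rewrite (_ : 2 * t - t = t) in inc_lo; last by ring.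
rewrite (_ : t - t / 2 = t / 2) in inc_hi; last by field.
split; first by rewrite ler_pdivrMr; lra.
by rewrite ler_pdivlMr; lra.
Unshelve. all: by end_near. Qed.

Lemma ln_density_little_o delta : 0 < delta ->
  \forall t \near +oo, 0 < f t /\ `|ln (f t) + (alpha + 1) * ln t| <= delta * ln t.
Proof.
move=> delta_gt0; have [c c_gt0 hbounds] := density_bounds.
have hG : \forall y \near +oo, `|ln (G y) + alpha * ln y| <= delta / 2 * ln y.
  by apply: ln_G_little_o; lra.
near=> t.
have [t1 tx0] : 1 <= t /\ x0 < t by near: t; exact: near_tail.
have [t2 tx02] : 1 <= t / 2 /\ x0 < t / 2 by near: t; exact: near_pinfty_div2 near_tail.
have Gt_gt0 : 0 < G t by apply: G_tail_gt0; lra.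
have Gt2_gt0 : 0 < G (t / 2) by apply: G_tail_gt0; lra.
have [lo hi] : c * G t / t <= f t /\ f t <= 2 * G (t / 2) / t by near: t; exact: hbounds.
have lo_gt0 : 0 < c * G t / t by apply: divr_gt0; [exact: mulr_gt0 | lra].
have ft_gt0 : 0 < f t := lt_le_trans lo_gt0 lo.
split=> //.
have lnGt : `|ln (G t) + alpha * ln t| <= delta / 2 * ln t by near: t; exact: hG.
have lnGt2 : `|ln (G (t / 2)) + alpha * ln (t / 2)| <= delta / 2 * ln (t / 2).
  by near: t; exact: near_pinfty_div2 hG.
have big : 2 * (`|ln c| + (1 + alpha) * ln 2) / delta <= ln t by near: t; exact: near_ln_ge.
rewrite ler_pdivrMr // in big.
have lnt2 : ln (t / 2) = ln t - ln 2 by rewrite ln_div ?posrE //; lra.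
have ln_lo : ln c + ln (G t) - ln t <= ln (f t).
  by rewrite -lnM ?posrE // -ln_div ?posrE ?mulr_gt0 // ler_ln ?posrE.
have ln_hi : ln (f t) <= ln 2 + ln (G (t / 2)) - ln t.
  rewrite -lnM ?posrE // -ln_div ?posrE ?mulr_gt0 // ler_ln ?posrE //.
  by apply: lt_le_trans hi.
rewrite lnt2 in lnGt2; move: lnGt lnGt2; rewrite !ler_norml => /andP[g1 g2] /andP[g3 g4].
have c1 := ler_norm (ln c); have c2 := ler_norm (- ln c); rewrite normrN in c2.
have : 0 <= delta * ln 2 by rewrite mulr_ge0 // ltW // ln2_gt0.
have : 0 <= alpha * ln 2 by rewrite mulr_ge0 // ltW // ln2_gt0.
have := @ln2_gt0 R; lra.
Unshelve. all: by end_near. Qed.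

Lemma near_G_le p : 0 < p -> \forall y \near +oo, G y <= p.
Proof.
move=> p_gt0; have hG : \forall y \near +oo, `|ln (G y) + alpha * ln y| <= alpha / 2 * ln y.
  by apply: ln_G_little_o; rewrite divr_gt0.
near=> y.
have [y1 yx0] : 1 <= y /\ x0 < y by near: y; exact: near_tail.
have Gy_gt0 : 0 < G y by apply: G_tail_gt0; lra.
have lny : - 2 * ln p / alpha <= ln y by near: y; exact: near_ln_ge.
have lnGy : `|ln (G y) + alpha * ln y| <= alpha / 2 * ln y by near: y; exact: hG.
rewrite -[G y]lnK ?posrE // -[p]lnK ?posrE // ler_expR.
rewrite ler_pdivrMr // in lny; move: lnGy; rewrite ler_norml; lra.
Unshelve. all: by end_near. Qed.

(* [q n] and [t n x] are the [a_n] and [t_n(x)] of the statement, with [F = 1 - G]. *)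
Let q (n : nat) := inf [set x | G x <= n%:R^-1].
Let t (n : nat) x := q n * x `^ (ln n%:R / alpha).

Lemma near_quantile A : \forall n \near \oo, [/\ A <= q n,
  forall y, y < q n -> n%:R^-1 < G y & forall y, q n < y -> G y <= n%:R^-1].
Proof.
pose B := Num.max A (Num.max 1 (x0 + 1)).
have AB : A <= B by rewrite le_max lexx.
have B1 : 1 <= B by rewrite !le_max lexx orbT.
have Bx0 : x0 < B by rewrite !lt_max ltrDl ltr01 !orbT.
have GB_gt0 : 0 < G B by apply: G_tail_gt0; lra.
near=> n.
have Bn_inv : (G B)^-1 < n%:R by near: n; exact: nbhs_infty_gtr.
have n_gt0 : 0 < n%:R^-1 :> R by rewrite invr_gt0 (lt_trans _ Bn_inv) ?invr_gt0.
have Bn : n%:R^-1 < G B by rewrite -[G B]invrK ltf_pV2 ?posrE ?invr_gt0 // -invr_gt0.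
have [y _ Gy] := pinfty_ex_gt (num_real 0) (near_G_le n_gt0).
have [Bq lt_q gt_q] := survival_quantile_bounds G_noninc Bn (ex_intro _ y Gy).
by split=> //; apply: le_trans Bq.
Unshelve. all: by end_near. Qed.

Lemma near_G_quantile_le : \forall n \near \oo, G (q n) <= n%:R^-1.
Proof.
(* The density bound [G u - G v <= (v - u) f u] makes [G] right-continuous at [q n]. *)
apply: filterS (near_quantile x1) => n [x1q _ gt_q]; apply/ler_addgt0Pr => e e_gt0.
pose y := q n + e / (`|f (q n)| + 1).
have den_gt0 : 0 < `|f (q n)| + 1 by have := normr_ge0 (f (q n)); lra.
have qy : q n < y by rewrite /y ltrDl; exact: divr_gt0.
have /andP[_ hinc] := G_increment x1q (ltW qy).
have : (y - q n) * f (q n) <= e.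
  apply: le_trans (ler_wpM2l (_ : 0 <= y - q n) (ler_norm _)) _; first lra.
  rewrite /y addrAC subrr add0r mulrAC ler_pdivrMr //.
  by rewrite ler_pM2l // lerDl.
have := gt_q _ qy; lra.
Qed.

Lemma ln_quantile_asymp delta : 0 < delta ->
  \forall n \near \oo, `|ln n%:R - alpha * ln (q n)| <= delta * ln n%:R.
Proof.
move=> delta_gt0; pose d := Num.min (alpha / 2) (alpha * delta / 4).
have [d_gt0 d_le1 d_le2] : [/\ 0 < d, d <= alpha / 2 & d <= alpha * delta / 4].
  by rewrite /d lt_min !ge_min !lexx orbT !divr_gt0 ?mulr_gt0.
have [Y [_ hY]] := ln_G_little_o d_gt0.
near=> n.
have [qA lt_q gt_q] : [/\ Num.max 4 (2 * Num.max Y x0 + 1) <= q n,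
  forall y, y < q n -> n%:R^-1 < G y & forall y, q n < y -> G y <= n%:R^-1].
  by near: n; exact: near_quantile.
move: qA; rewrite ge_max => /andP[q4 qYx0].
have q_gt0 : 0 < q n by apply: lt_le_trans q4.
have [Yq x0q] : Y < q n / 2 /\ x0 < q n / 2.
  have : Num.max Y x0 < q n / 2.
    by rewrite ltr_pdivlMr // mulrC (lt_le_trans _ qYx0) // ltrDl.
  by rewrite gt_max => /andP[].
have [q2_lt q2_gt] : q n / 2 < q n /\ q n < 2 * q n.
  by rewrite ltr_pdivrMr // ltr_pMr // ltr_pMl // ltr1n.
have n_gt0 : (0 < n)%N by near: n; exact: nbhs_infty_gt.
have lnVn : ln n%:R^-1 = - ln (n%:R : R) by rewrite lnV // posrE ltr0n.
have i1 : ln (G (2 * q n)) <= - ln n%:R.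
  by rewrite -lnVn ler_ln ?posrE ?invr_gt0 ?ltr0n ?G_tail_gt0 //; [apply: gt_q|lra|lra].
have i2 : - ln n%:R < ln (G (q n / 2)).
  by rewrite -lnVn ltr_ln ?posrE ?invr_gt0 ?ltr0n ?G_tail_gt0 //; [apply: lt_q|lra].
have j1 := hY _ (lt_trans Yq (lt_trans q2_lt q2_gt)).
have j2 := hY _ Yq.
rewrite lnM ?posrE // in j1; rewrite ln_div ?posrE // in j2.
have ln2q : ln 2 <= ln (q n) by rewrite ler_ln ?posrE //; lra.
have big : 4 * alpha * ln 2 <= delta * ln n%:R.
  rewrite [delta * _]mulrC -ler_pdivrMr //.
  by near: n; exact: cvgr_idn (near_ln_ge _).
exact: (quantile_ln_estimate alpha_gt0 d_gt0 d_le1 d_le2 delta_gt0 (ln2_gt0 R) ln2q big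
  i1 i2 j1 j2).
Unshelve. all: by end_near. Qed.

Lemma near_quantile_ge A : \forall n \near \oo, A <= q n.
Proof. by apply: filterS (near_quantile A) => n []. Qed.

Lemma ln_quantile_le : \forall n \near \oo, alpha * ln (q n) <= 2 * ln n%:R.
Proof.
by apply: filterS (ln_quantile_asymp ltr01) => n; rewrite mul1r => /ler_normlP[h _]; lra.
Qed.

Lemma quantile_le_t n x : (0 < n)%N -> 0 < q n -> 1 <= x -> q n <= t n x.
Proof.
move=> n_gt0 q_gt0 x_ge1; rewrite /t ler_pMr //.
have := @ler_powR _ x x_ge1 0 (ln n%:R / alpha); rewrite powRr0; apply.
by rewrite divr_ge0 ?ln_ge0 ?ler1n // ltW.
Qed.

Lemma ln_t n x : 0 < q n -> 0 < x -> ln (t n x) = ln (q n) + ln n%:R / alpha * ln x.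
Proof. by move=> q_gt0 x_gt0; rewrite /t lnM ?posrE ?powR_gt0 // ln_powR. Qed.

Lemma ln_density_at_t M e : 1 <= M -> 0 < e ->
  \forall n \near \oo, forall x, 1 <= x <= M ->
    0 < f (t n x) /\ `|ln (f (t n x)) + (alpha + 1) * ln (t n x)| <= e * ln n%:R.
Proof.
move=> M1 e_gt0; pose c := (2 + ln M) / alpha.
have c_gt0 : 0 < c by rewrite divr_gt0 //; have := ln_ge0 M1; lra.
have [Y [_ hY]] := ln_density_little_o (divr_gt0 e_gt0 c_gt0).
near=> n => x /andP[x_ge1 xM].
have : Num.max (Y + 1) 1 <= q n by near: n; exact: near_quantile_ge.
rewrite ge_max => /andP[qY q1].
have q_gt0 : 0 < q n by apply: lt_le_trans q1.
have n_gt0 : (0 < n)%N by near: n; exact: nbhs_infty_gt.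
have qt := quantile_le_t n_gt0 q_gt0 x_ge1.
have Yq : Y < q n by apply: lt_le_trans qY; rewrite ltrDl.
have [ft_gt0 hft] := hY (t n x) (lt_le_trans Yq qt).
split=> //; apply: le_trans hft _.
have hq : alpha * ln (q n) <= 2 * ln n%:R by near: n; exact: ln_quantile_le.
have l_ge0 : 0 <= ln (n%:R : R) by apply: ln_ge0; rewrite ler1n.
have lnq_ge0 : 0 <= ln (q n) by exact: ln_ge0.
have lnx_ge0 : 0 <= ln x by exact: ln_ge0.
have lnt_le : ln (t n x) <= c * ln n%:R.
  have h1 : ln (q n) <= 2 * ln n%:R / alpha by rewrite ler_pdivlMr // mulrC.
  have h2 : ln n%:R / alpha * ln x <= ln n%:R / alpha * ln M.
    apply: ler_wpM2l; first by rewrite divr_ge0 // ltW.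
    by rewrite ler_ln ?posrE //; lra.
  rewrite ln_t //; last lra.
  have -> : c * ln n%:R = 2 * ln n%:R / alpha + ln n%:R / alpha * ln M.
    by rewrite /c; field; exact: lt0r_neq0.
  exact: lerD.
have lnt_ge0 : 0 <= ln (t n x) by apply: ln_ge0; lra.
apply: le_trans (ler_wpM2l (ltW (divr_gt0 e_gt0 c_gt0)) lnt_le) _.
by rewrite mulrA divfK // gt_eqF.
Unshelve. all: by end_near. Qed.

Lemma ln_distr_pow_bounds : \forall n \near \oo, forall x, 1 <= x ->
  0 < 1 - G (t n x) /\ - 2 <= n.-1%:R * ln (1 - G (t n x)) <= 0.
Proof.
near=> n => x x_ge1.
have : Num.max 1 (x0 + 1) <= q n by near: n; exact: near_quantile_ge.
rewrite ge_max => /andP[q1 qx0].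
have n2 : (2 <= n)%N by near: n; exact: nbhs_infty_ge.
have q_gt0 : 0 < q n by apply: lt_le_trans q1.
have qt := quantile_le_t (ltnW n2) q_gt0 x_ge1.
have Gt_gt0 : 0 < G (t n x) by apply: G_tail_gt0; lra.
have Gt_le : G (t n x) <= n%:R^-1.
  by apply: le_trans (G_noninc qt) _; near: n; exact: near_G_quantile_le.
have n_inv : n%:R^-1 <= 1 / 2 :> R by rewrite div1r lef_pV2 ?posrE ?ler_nat // ltr0n ltnW.
have hln : - (2 * G (t n x)) <= ln (1 - G (t n x)).
  by apply: ln1B_ge; rewrite ltW //=; exact: le_trans Gt_le n_inv.
have n_gt0 : 0 < n%:R :> R by rewrite ltr0n ltnW.
split.
  by rewrite subr_gt0 (le_lt_trans (le_trans Gt_le n_inv)) // ltr_pdivrMr // mul1r ltr1n.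
apply/andP; split; last first.
  by apply: mulr_ge0_le0; [exact: ler0n | apply: ln_le0; rewrite gerBl ltW].
have n1 : n.-1%:R = n%:R - 1 :> R by rewrite -subn1 natrB // ltnW.
have h : n.-1%:R * (- (2 * n%:R^-1)) <= n.-1%:R * ln (1 - G (t n x)).
  apply: ler_wpM2l; first exact: ler0n.
  by apply: le_trans hln; rewrite lerN2 ler_pM2l.
apply: le_trans h; rewrite n1 (_ : (n%:R - 1) * (- (2 * n%:R^-1)) = - 2 + 2 / n%:R :> R).
  by rewrite lerDl divr_ge0 // ltW.
by field; exact: lt0r_neq0.
Unshelve. all: by end_near. Qed.

Lemma ln_max_density_asymp M eps : 1 < M -> 0 < eps ->
  \forall n \near \oo, forall x, 1 <= x <= M ->
    `|ln (n%:R * q n * (alpha / ln n%:R) * x `^ (ln n%:R / alpha - 1)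
        * (1 - G (t n x)) ^+ n.-1 * f (t n x)) / ln n%:R - - ln x| < eps.
Proof.
move=> M1 eps_gt0; have e_gt0 : 0 < eps / 8 by rewrite divr_gt0.
near=> n.
have hf : forall x, 1 <= x <= M -> 0 < f (t n x) /\
    `|ln (f (t n x)) + (alpha + 1) * ln (t n x)| <= eps / 8 * ln n%:R.
  by near: n; apply: ln_density_at_t => //; exact: ltW.
have hE : forall x, 1 <= x ->
    0 < 1 - G (t n x) /\ - 2 <= n.-1%:R * ln (1 - G (t n x)) <= 0.
  by near: n; exact: ln_distr_pow_bounds.
have hq : `|ln n%:R - alpha * ln (q n)| <= eps / 8 * ln n%:R.
  by near: n; exact: ln_quantile_asymp.
have lnl : ln (ln (n%:R : R)) <= eps / 8 * ln n%:R by near: n; exact: near_lnln_le.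
have q_gt0 : 0 < q n by apply: lt_le_trans ltr01 _; near: n; exact: near_quantile_ge.
have n1 : 1 < n%:R :> R by rewrite ltr1n; near: n; exact: nbhs_infty_gt.
have [l1 hl] : 1 <= ln (n%:R : R) /\ (2 + ln M + `|ln alpha|) / (eps / 8) <= ln n%:R.
  by split; near: n; exact: cvgr_idn (near_ln_ge _).
rewrite ler_pdivrMr // mulrC in hl.
move=> x xint; have /andP[x_ge1 xM] := xint.
have [ft_gt0 {}hf] := hf x xint; have [Ft_gt0 {}hE] := hE x x_ge1.
rewrite ln_density_product //; last lra.
rewrite -/(t n x); rewrite ln_t // in hf; last lra.
have lnx : 0 <= ln x <= ln M by rewrite ln_ge0 ?ler_ln ?posrE //=; lra.
have lnl_ge0 : 0 <= ln (ln (n%:R : R)) by exact: ln_ge0.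
have l_gt0 : 0 < ln (n%:R : R) by lra.
set l := ln n%:R in hq hf lnl hl l_gt0 lnl_ge0 *; set lam := ln (q n) in hq hf *.
set E := n.-1%:R * _ in hE *; set lf := ln (f _) in hf *.
have -> : (l + lam + ln alpha - ln l + (l / alpha - 1) * ln x + E + lf) / l - - ln x =
    ((l - alpha * lam) - ln x + ln alpha - ln l + E
      + (lf + (alpha + 1) * (lam + l / alpha * ln x))) / l.
  by field; apply/andP; split; exact: lt0r_neq0.
rewrite normrM normfV (gtr0_norm l_gt0) ltr_pdivrMr // ltr_norml.
move: hq hf hE lnx; rewrite !ler_norml.
have := ler_norm (ln alpha); have := ler_norm (- ln alpha); rewrite normrN.
lra.
Unshelve. all: by end_near. Qed.

End RegularlyVaryingTail.

Theorem mainTheorem4 (R : realType) (d : measure_display) (T : measurableType d)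
  (P : probability T R) (X : {RV P >-> R})
  (alpha x0 x1 : R) (L f : R -> R)
  (halpha : 0 < alpha) (hx0 : 0 < x0)
  (hL : slowly_varying L)
  (htail : forall x : R, x0 < x ->
     fine (P [set w | x < X w]) = x `^ (- alpha) * L x)
  (hf_meas : measurable_fun setT f)
  (hf_nonneg : forall x : R, 0 <= f x)
  (hdens : forall x : R,
     P [set w | X w <= x] = (\int[lebesgue_measure]_(y in `]-oo, x]) (f y)%:E)%E)
  (hf_noninc : forall x y : R, x1 <= x -> x <= y -> f y <= f x)
  (M : R) (hM : 1 < M) :
  let F := distr_fun P X in
  let a := fun n : nat => gen_left_inverse F (1 - n%:R^-1) in
  let t := fun (n : nat) (x : R) => a n * x `^ (ln n%:R / alpha) in
  let g := fun (n : nat) (x : R) =>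
    n%:R * a n * (alpha / ln n%:R) * x `^ (ln n%:R / alpha - 1)
      * F (t n x) ^+ n.-1 * f (t n x) in
  forall eps : R, 0 < eps ->
    exists N : nat, forall n : nat, (N <= n)%N -> (2 <= n)%N ->
      forall x : R, 1 <= x <= M ->
        `| ln (g n x) / ln n%:R - (- ln x) | < eps.
Proof.
move=> F a t g eps eps_gt0.
pose G x := fine (P [set w | x < X w]).
have FE x : F x = 1 - G x := distr_funE X x.
have [L_gt0 L_doubling] := hL.
have G_increment u v : x1 <= u -> u <= v -> (v - u) * f v <= G u - G v <= (v - u) * f u.
  move=> x1u uv; rewrite (_ : G u - G v = F v - F u); last by rewrite !FE; ring.
  exact (distr_fun_increment hf_meas hf_nonneg hf_noninc hdens x1u uv).
have aE n : a n = inf [set x | G x <= n%:R^-1].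
  by congr inf; apply/seteqP; split => x /=; rewrite FE lerD2l lerN2.
have [N _ hN] := ln_max_density_asymp halpha L_gt0 (L_doubling 2 (ltr0Sn _ 1))
  (@survival_noninc _ _ _ P X) htail G_increment hM eps_gt0.
by exists N => n Nn _ x xint; rewrite /g /t aE !FE; exact: hN.
Qed.
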